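(* Let $d\ge 2$ and for $x,y,z\in\mathbb S^{d-1}$ let $A^2(x,y,z)$ be the square of the area of the triangle with vertices $x,y,z$. Then the uniform surface measure $\sigma$ maximizes $I_{A^2}(\mu)=\iiint A^2(x,y,z)\,d\mu(x)d\mu(y)d\mu(z)$ over $\mu\in\mathcal P(\mathbb S^{d-1})$. Moreover, any balanced isotropic measure $\mu\in\mathcal P(\mathbb S^{d-1})$ maximizes $I_{A^2}$.
   Context: $\mathbb S^{d-1}$ is the unit sphere in $\mathbb R^d$, $\mathcal P(\mathbb S^{d-1})$ the Borel probability measures on it, and $\sigma$ the normalized surface measure. $\mu$ is isotropic if $\int xx^T\,d\mu(x)=\frac1d I_d$, and balanced if $\int x\,d\mu(x)=0$. *)

From HB Require Import structures.
From mathcomp Require Import all_boot all_order all_algebra.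
From mathcomp Require Import all_classical all_reals all_analysis.
Set Implicit Arguments. Unset Strict Implicit. Unset Printing Implicit Defensive.
Import Order.TTheory GRing.Theory Num.Theory numFieldNormedType.Exports.
Local Open Scope classical_set_scope.
Local Open Scope ring_scope.

Definition euclid (R : realType) (d : nat) :=
  g_sigma_algebraType (open : set_system 'rV[R]_d).

Definition dotv (R : realType) (d : nat) (u v : 'rV[R]_d) : R :=
  \sum_(i < d) u 0 i * v 0 i.
Definition sqnorm (R : realType) (d : nat) (u : 'rV[R]_d) : R := dotv u u.

Definition sphere (R : realType) (d : nat) : set (euclid R d) :=
  [set x | sqnorm (x : 'rV[R]_d) = 1].

(* Borel probability measures on S^{d-1}: Borel probability measures on R^d
   concentrated on the sphere. *)
Definition on_sphere (R : realType) (d : nat) (mu : probability (euclid R d) R) :=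
  mu (~` @sphere R d) = 0%E.

(* Square of the area of the triangle with vertices x, y, z in R^d:
   (1/4) * Gram determinant of the edge vectors u = y - x, v = z - x. *)
Definition area2 (R : realType) (d : nat) (x y z : 'rV[R]_d) : R :=
  let u := y - x in let v := z - x in
  (sqnorm u * sqnorm v - (dotv u v) ^+ 2) / 4.

Definition IA2 (R : realType) (d : nat) (mu : probability (euclid R d) R) : \bar R :=
  (\int[mu]_x \int[mu]_y \int[mu]_z (area2 (x : 'rV[R]_d) y z)%:E)%E.

Definition maximizes_IA2 (R : realType) (d : nat) (mu : probability (euclid R d) R) :=
  forall nu : probability (euclid R d) R, on_sphere nu -> (IA2 nu <= IA2 mu)%E.

Definition orthogonal_mx (R : realType) (d : nat) (Q : 'M[R]_d) :=
  Q *m Q^T = 1%:M.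

(* The normalized surface measure sigma: the rotation-invariant
   Borel probability measure on S^{d-1}. *)
Definition is_normalized_surface_measure (R : realType) (d : nat)
    (sigma : probability (euclid R d) R) :=
  on_sphere sigma /\
  forall (Q : 'M[R]_d) (A : set (euclid R d)), orthogonal_mx Q -> measurable A ->
    sigma ((fun x : euclid R d => (x : 'rV[R]_d) *m Q : euclid R d) @^-1` A) = sigma A.

Definition balanced (R : realType) (d : nat) (mu : probability (euclid R d) R) :=
  forall i : 'I_d, (\int[mu]_x ((x : 'rV[R]_d) 0 i)%:E)%E = 0%E.

Definition isotropic (R : realType) (d : nat) (mu : probability (euclid R d) R) :=
  forall i j : 'I_d, (\int[mu]_x ((x : 'rV[R]_d) 0 i * x 0 j)%:E)%E
                     = ((1%:M : 'M[R]_d) i j / d%:R)%:E.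

(* Write m = E[x] and M = E[x^T x] for a probability measure mu on the sphere.
   With z on the sphere, 4 A^2(x, y, z) is an affine function of z plus the
   quadratic form -((y - x).z)^2, so its mean in z is explicit; repeating this
   in y and then in x gives
     I(mu) = (3 - 6 |m|^2 + 6 m M m^T - 3 tr (M^2)) / 4.
   Since tr M = 1, tr (M^2) - 1/d = tr ((M - I/d)^2) >= 0, and
   m M m^T = E[(m.x)^2] <= |m|^2. Hence I(mu) <= (3 - 3/d) / 4, with equality
   when m = 0 and M = I/d, i.e. for balanced isotropic mu. The surface measure
   is balanced and isotropic because it is invariant under the reflections
   x_i |-> -x_i and the coordinate transpositions. *)

From HB Require Import structures.
From mathcomp Require Import all_boot all_order all_algebra all_fingroup.
From mathcomp Require Import all_classical all_reals all_analysis.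
From mathcomp Require Import ring lra.
Set Implicit Arguments.
Unset Strict Implicit.
Unset Printing Implicit Defensive.
Import Order.TTheory GRing.Theory Num.Theory numFieldNormedType.Exports.
Local Open Scope classical_set_scope.
Local Open Scope ring_scope.

Section euclidean_algebra.
Variables (R : realType) (d : nat).
Implicit Types (u v w : 'rV[R]_d) (Q : 'M[R]_d) (a : R).

Lemma dotvE u v : dotv u v = (u *m v^T) 0 0.
Proof. by rewrite mxE; apply: eq_bigr => i _; rewrite mxE. Qed.

Lemma dotv0l v : dotv 0 v = 0.
Proof. by rewrite dotvE mul0mx mxE. Qed.

Lemma dotvC u v : dotv u v = dotv v u.
Proof. by apply: eq_bigr => i _; rewrite mulrC. Qed.

Lemma dotvDl u v w : dotv (u + v) w = dotv u w + dotv v w.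
Proof. by rewrite !dotvE mulmxDl mxE. Qed.

Lemma dotvZl a u v : dotv (a *: u) v = a * dotv u v.
Proof. by rewrite !dotvE -scalemxAl mxE. Qed.

Lemma dotvNl u v : dotv (- u) v = - dotv u v.
Proof. by rewrite -scaleN1r dotvZl mulN1r. Qed.

Lemma dotvBl u v w : dotv (u - v) w = dotv u w - dotv v w.
Proof. by rewrite dotvDl dotvNl. Qed.

Lemma dotvZr a u v : dotv u (a *: v) = a * dotv u v.
Proof. by rewrite dotvC dotvZl dotvC. Qed.

Lemma dotvBr u v w : dotv w (u - v) = dotv w u - dotv w v.
Proof. by rewrite dotvC dotvBl !(dotvC w). Qed.

Lemma dotv_mulmx u v Q : dotv (u *m Q) v = dotv u (v *m Q^T).
Proof. by rewrite !dotvE trmx_mul trmxK mulmxA. Qed.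

Lemma sqnorm_mulmx_orthogonal u Q : orthogonal_mx Q -> sqnorm (u *m Q) = sqnorm u.
Proof. by move=> oQ; rewrite /sqnorm !dotvE trmx_mul mulmxA -(mulmxA u) oQ mulmx1. Qed.

Lemma sqnorm_ge0 u : 0 <= sqnorm u.
Proof. by apply: sumr_ge0 => i _; rewrite -expr2 sqr_ge0. Qed.

Lemma sqnormB u v : sqnorm (u - v) = sqnorm u - 2 * dotv u v + sqnorm v.
Proof. by rewrite /sqnorm dotvBl !dotvBr (dotvC v u); ring. Qed.

Lemma sqr_dotv_le_sqnorm u v : sqnorm v = 1 -> dotv u v ^+ 2 <= sqnorm u.
Proof.
move=> v1; have := sqnorm_ge0 (u - dotv u v *: v).
rewrite sqnormB /sqnorm dotvZr !dotvZl dotvZr -/(sqnorm v) v1; lra.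
Qed.

Definition bform Q u v := dotv (u *m Q) v.

Lemma bformBl Q u v w : bform Q (u - v) w = bform Q u w - bform Q v w.
Proof. by rewrite /bform mulmxBl dotvBl. Qed.

Lemma bformBr Q u v w : bform Q w (u - v) = bform Q w u - bform Q w v.
Proof. by rewrite /bform dotvBr. Qed.

Lemma bformDl Q1 Q2 u v : bform (Q1 + Q2) u v = bform Q1 u v + bform Q2 u v.
Proof. by rewrite /bform mulmxDr dotvDl. Qed.

Lemma bformZl a Q u v : bform (a *: Q) u v = a * bform Q u v.
Proof. by rewrite /bform -scalemxAr dotvZl. Qed.

Lemma bform_outer u v w : bform (u^T *m v) w w = dotv w u * dotv v w.
Proof.
rewrite /bform mulmxA [w *m u^T]mx11_scalar -dotvE mul_scalar_mx.
by rewrite dotvZl.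
Qed.

Lemma mxtrace_outer u v Q : \tr (u^T *m v *m Q) = bform Q v u.
Proof.
rewrite -mulmxA mxtrace_mulC /bform dotvE.
by rewrite /mxtrace big_ord1.
Qed.

Lemma mxtrace_mul_tr_ge0 Q : 0 <= \tr (Q *m Q^T).
Proof.
apply: sumr_ge0 => i _; rewrite mxE; apply: sumr_ge0 => j _.
by rewrite mxE -expr2 sqr_ge0.
Qed.

Lemma area2_sphere x y z : sqnorm z = 1 ->
  area2 x y z = (sqnorm (y - x) * (1 + sqnorm x) - dotv (y - x) x ^+ 2) / 4
    + dotv ((dotv (y - x) x / 2) *: (y - x) - (sqnorm (y - x) / 2) *: x) z
    + bform (- 4^-1 *: ((y - x)^T *m (y - x))) z z.
Proof.
move=> z1; rewrite /area2 /= bformZl bform_outer; set u := y - x.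
rewrite sqnormB dotvBr (dotvBl (_ *: u)) !dotvZl z1 !(dotvC z); by field.
Qed.

Section partial_means.
Variables (m : 'rV[R]_d) (M : 'M[R]_d).
Hypothesis M_sym : M^T = M.

(* x and y range over all of R^d: the outer integrals of IA2 run over R^d and
   their integrands cannot be modified off the sphere without first knowing
   that they are measurable. *)
Definition area2_mean_z x y :=
  (sqnorm (y - x) * (1 + sqnorm x) - dotv (y - x) x ^+ 2
   + 2 * dotv (y - x) x * dotv (y - x) m - 2 * sqnorm (y - x) * dotv x m
   - bform M (y - x) (y - x)) / 4.

Definition area2_mean_yz x :=
  (1 + 2 * sqnorm x - 4 * dotv x m + 2 * dotv x m ^+ 2 - 2 * sqnorm x * sqnorm m
   + 4 * bform M x m - 2 * bform M x x - \tr (M *m M)) / 4.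

Definition area2_mean :=
  (3 - 6 * sqnorm m + 6 * bform M m m - 3 * \tr (M *m M)) / 4.

Lemma bform_symC u v : bform M u v = bform M v u.
Proof. by rewrite /bform dotv_mulmx M_sym dotvC. Qed.

Lemma area2_mean_z_sphere x y : sqnorm y = 1 ->
  area2_mean_z x y = ((1 + 2 * sqnorm x) / 4 - dotv x m / 2 - bform M x x / 4)
    + dotv (((dotv x m - 1) / 2) *: x - (sqnorm x / 2) *: m + 2^-1 *: (x *m M)) y
    + bform (2^-1 *: (x^T *m m) + (- 4^-1) *: (x^T *m x) + (- 4^-1) *: M) y y.
Proof.
move=> y1; rewrite /area2_mean_z !bformDl !bformZl !bform_outer.
rewrite sqnormB y1 bformBl !bformBr (bform_symC y x) !dotvDl !dotvNl !dotvZl.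
rewrite -/(sqnorm x) (dotvC y x) (dotvC y m) /bform; by field.
Qed.

Lemma area2_mean_yz_sphere x : sqnorm x = 1 ->
  area2_mean_yz x = (3 - 2 * sqnorm m - \tr (M *m M)) / 4 + dotv (m *m M - m) x
    + bform (2^-1 *: (m^T *m m) + (- 2^-1) *: M) x x.
Proof.
move=> x1; rewrite /area2_mean_yz !bformDl !bformZl bform_outer x1 dotvBl.
rewrite -/(bform M m x) (bform_symC m x) (dotvC m x); by field.
Qed.

End partial_means.

Lemma area2_mean_isotropic : (0 < d)%N ->
  area2_mean 0 d%:R^-1%:M = (3 - 3 / d%:R) / 4.
Proof.
move=> d_gt0; rewrite /area2_mean -scalar_mxM mxtrace_scalar.
rewrite -(mulr_natr (_ * _)) mulfVK ?pnatr_eq0 -?lt0n //.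
by rewrite /sqnorm /bform mul0mx dotv0l; lra.
Qed.

End euclidean_algebra.

Section sphere_bounded_functions.
Variables (R : realType) (d : nat).
Local Notation E := (euclid R d).
Local Notation S := (@sphere R d).

Lemma continuous_measurable_euclid (f : 'rV[R]_d -> R) : continuous f ->
  measurable_fun [set: E] (f : E -> R).
Proof.
move=> /continuousP cf.
apply: (measurability _ (measurable_realfun.RGenOpens.measurableE R)).
move=> _ [_ [a [b ->] <-]]; rewrite setTI; apply: sub_sigma_algebra.
exact/cf/interval_open.
Qed.

Definition sphere_bounded (f : E -> R) :=
  measurable_fun [set: E] f /\ exists C, forall x, S x -> `|f x| <= C.

Definition sphere_bounded_vec (a : E -> 'rV[R]_d) :=
  forall i, sphere_bounded (fun x => a x 0 i).

Lemma sphere_bounded_cst c : sphere_bounded (fun=> c).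
Proof. by split; [exact: measurable_cst | exists `|c|]. Qed.

Lemma sphere_boundedD f g : sphere_bounded f -> sphere_bounded g ->
  sphere_bounded (fun x => f x + g x).
Proof.
move=> [mf [C fC]] [mg [D gD]]; split.
  exact: measurable_realfun.measurable_funD.
exists (C + D) => x Sx; rewrite (le_trans (ler_normD _ _)) // lerD ?fC ?gD //.
Qed.

Lemma sphere_boundedN f : sphere_bounded f -> sphere_bounded (fun x => - f x).
Proof.
move=> [mf [C fC]]; split; first exact: measurable_realfun.measurable_funN.
by exists C => x Sx; rewrite normrN fC.
Qed.

Lemma sphere_boundedM f g : sphere_bounded f -> sphere_bounded g ->
  sphere_bounded (fun x => f x * g x).
Proof.
move=> [mf [C fC]] [mg [D gD]]; split.
  exact: measurable_realfun.measurable_funM.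
by exists (C * D) => x Sx; rewrite normrM ler_pM ?fC ?gD.
Qed.

Lemma sphere_bounded_sum (I : Type) (s : seq I) (F : I -> E -> R) :
  (forall i, sphere_bounded (F i)) ->
  sphere_bounded (fun x => \sum_(i <- s) F i x).
Proof.
move=> FS; elim: s => [|i s IHs].
  by rewrite (_ : (fun x => _) = fun=> 0); [exact: sphere_bounded_cst|
    apply/funext => x; rewrite big_nil].
rewrite (_ : (fun x => _) = fun x => F i x + \sum_(j <- s) F j x).
  exact: sphere_boundedD.
by apply/funext => x; rewrite big_cons.
Qed.

Lemma sphere_bounded_vec_id : sphere_bounded_vec (fun x : E => x : 'rV[R]_d).
Proof.
move=> i; split.
  by apply: continuous_measurable_euclid; exact: (@coord_continuous R 1 d 0 i).
exists 1 => x Sx; rewrite -(expr_le1 (n := 2)) ?real_normK ?num_real //.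
by rewrite -Sx /sqnorm /dotv (bigD1 i) //= lerDl sumr_ge0 // => j _; rewrite -expr2 sqr_ge0.
Qed.

Lemma sphere_bounded_vec_cst v : sphere_bounded_vec (fun=> v).
Proof. by move=> i; exact: sphere_bounded_cst. Qed.

Lemma sphere_bounded_vecB a b : sphere_bounded_vec a -> sphere_bounded_vec b ->
  sphere_bounded_vec (fun x => a x - b x).
Proof.
move=> ha hb i; under eq_fun => x do rewrite !mxE.
exact/sphere_boundedD/sphere_boundedN.
Qed.

Lemma sphere_bounded_vec_mulmx a (Q : 'M[R]_d) : sphere_bounded_vec a ->
  sphere_bounded_vec (fun x => a x *m Q).
Proof.
move=> ha j; under eq_fun => x do rewrite !mxE.
by apply: sphere_bounded_sum => k; apply/sphere_boundedM/sphere_bounded_cst.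
Qed.

Lemma sphere_bounded_dotv a b : sphere_bounded_vec a -> sphere_bounded_vec b ->
  sphere_bounded (fun x => dotv (a x) (b x)).
Proof. by move=> ha hb; apply: sphere_bounded_sum => i; exact: sphere_boundedM. Qed.

End sphere_bounded_functions.

Ltac sphere_bounded_tac := rewrite ?/sqnorm ?/bform; repeat match goal with
  | |- sphere_bounded _ => first [ exact: sphere_bounded_cst
      | exact: sphere_bounded_vec_id | apply: sphere_bounded_vec_mulmx
      | apply: sphere_bounded_dotv | apply: sphere_boundedD
      | apply: sphere_boundedN | apply: sphere_boundedM ]
  | |- sphere_bounded_vec _ => first [ exact: sphere_bounded_vec_cst
      | exact: sphere_bounded_vec_id | apply: sphere_bounded_vec_mulmx
      | apply: sphere_bounded_vecB ]
  end.

Lemma measurable_sphere {R : realType} {d : nat} : measurable (@sphere R d).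
Proof.
have [+ _] := sphere_bounded_dotv (@sphere_bounded_vec_id R d) (@sphere_bounded_vec_id R d).
by move=> /(_ measurableT [set 1] (measurable_set1 1)); rewrite setTI.
Qed.

Section moments.
Variables (R : realType) (d : nat) (nu : probability (euclid R d) R).
Hypothesis nu_sphere : on_sphere nu.
Local Notation E := (euclid R d).
Local Notation S := (@sphere R d).

Lemma probability_sphere : nu S = 1%E.
Proof.
have mS := measurable_sphere.
rewrite -(probability_setT nu) -(setUv S) measureU ?setICr //; last exact: measurableC.
by rewrite [X in _ + X]nu_sphere adde0.
Qed.

Lemma sphere_bounded_integrable f : sphere_bounded f -> nu.-integrable S (EFin \o f).
Proof.
move=> [mf [C fC]].
apply: (le_integrable measurable_sphere _ _ (finite_measure_integrable_cst _ C _)).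
- exact/measurable_realfun.measurable_EFinP/measurable_funTS.
- by move=> x Sx /=; rewrite lee_fin (le_trans (fC x Sx) (ler_norm C)).
- exact: measurable_sphere.
Qed.

Lemma integral_sphere f : sphere_bounded f ->
  (\int[nu]_x (f x)%:E = (\int[nu]_(x in S) f x)%:E)%E.
Proof.
move=> fS; have mS := measurable_sphere.
have mf := (measurable_realfun.measurable_EFinP _ _).2 fS.1.
rewrite -(setUv S) integral_setU //; last 3 first.
- exact: measurableC.
- by rewrite setUv.
- by rewrite /disj_set setICr.
rewrite [X in (_ + X)%E]null_set_integral ?adde0 ?fineK //.
- exact: integrable_fin_num (sphere_bounded_integrable fS).
- exact: measurableC.
- by apply/measurable_realfun.measurable_EFinP; exact: measurable_funTS fS.1.
Qed.

Lemma Rintegral_sphere_cst c : \int[nu]_(x in S) c = c.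
Proof.
rewrite /Rintegral integral_cst; last exact: measurable_sphere.
by rewrite [X in (_ * X)%E](_ : _ = 1%E) ?mule1 //; exact: probability_sphere.
Qed.

Lemma Rintegral_sphereD f g : sphere_bounded f -> sphere_bounded g ->
  \int[nu]_(x in S) (f x + g x) = \int[nu]_(x in S) f x + \int[nu]_(x in S) g x.
Proof.
move=> fS gS; apply: RintegralD; first exact: measurable_sphere.
  exact: sphere_bounded_integrable.
exact: sphere_bounded_integrable.
Qed.

Lemma Rintegral_sphereZ c f : sphere_bounded f ->
  \int[nu]_(x in S) (c * f x) = c * \int[nu]_(x in S) f x.
Proof.
move=> fS; apply: RintegralZl; first exact: measurable_sphere.
exact: sphere_bounded_integrable.
Qed.

Lemma Rintegral_sphere_sum (I : Type) (s : seq I) (F : I -> E -> R) :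
  (forall i, sphere_bounded (F i)) ->
  \int[nu]_(x in S) \sum_(i <- s) F i x = \sum_(i <- s) \int[nu]_(x in S) F i x.
Proof.
move=> FS; elim: s => [|i s IHs].
  by under eq_Rintegral do rewrite big_nil; rewrite Rintegral_sphere_cst big_nil.
under eq_Rintegral do rewrite big_cons.
by rewrite Rintegral_sphereD ?big_cons ?IHs //; exact: sphere_bounded_sum.
Qed.

Definition mean_vec : 'rV[R]_d := \row_i \int[nu]_(x in S) (x : 'rV[R]_d) 0 i.

Definition moment_mx : 'M[R]_d :=
  \matrix_(i, j) \int[nu]_(x in S) ((x : 'rV[R]_d) 0 i * (x : 'rV[R]_d) 0 j).

Local Notation m := mean_vec.
Local Notation M := moment_mx.

Lemma moment_mx_sym : M^T = M.
Proof.
by apply/matrixP => i j; rewrite !mxE; apply: eq_Rintegral => x _; rewrite mulrC.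
Qed.

Lemma mxtrace_moment_mx : \tr M = 1.
Proof.
rewrite /mxtrace; under eq_bigr do rewrite mxE.
rewrite -Rintegral_sphere_sum => [|i]; last by sphere_bounded_tac.
by rewrite -[RHS](Rintegral_sphere_cst 1); apply: eq_Rintegral => x /set_mem.
Qed.

Lemma Rintegral_sphere_dotv p : \int[nu]_(x in S) dotv p x = dotv p m.
Proof.
rewrite Rintegral_sphere_sum => [|i]; last by sphere_bounded_tac.
by apply: eq_bigr => i _; rewrite Rintegral_sphereZ ?mxE //; sphere_bounded_tac.
Qed.

Lemma Rintegral_sphere_bform Q : \int[nu]_(x in S) bform Q x x = \tr (Q *m M).
Proof.
rewrite -mxtrace_tr trmx_mul moment_mx_sym mxtrace_mulC.
rewrite Rintegral_sphere_sum => [|k]; last by sphere_bounded_tac.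
apply: eq_bigr => k _; rewrite !mxE.
under eq_Rintegral do rewrite mxE big_distrl /=.
rewrite Rintegral_sphere_sum => [|i]; last by sphere_bounded_tac.
apply: eq_bigr => i _; rewrite !mxE -Rintegral_sphereZ; last by sphere_bounded_tac.
by apply: eq_Rintegral => x _; rewrite mulrCA mulrA.
Qed.

Lemma Rintegral_sphere_quadratic c p Q :
  \int[nu]_(x in S) (c + dotv p x + bform Q x x) = c + dotv p m + \tr (Q *m M).
Proof.
rewrite !Rintegral_sphereD ?Rintegral_sphere_cst ?Rintegral_sphere_dotv
  ?Rintegral_sphere_bform //; sphere_bounded_tac.
Qed.

Lemma Rintegral_area2 x y :
  \int[nu]_(z in S) area2 x y (z : 'rV[R]_d) = area2_mean_z m M x y.
Proof.
under eq_Rintegral => z /set_mem z1 do rewrite (area2_sphere _ _ z1).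
rewrite Rintegral_sphere_quadratic -scalemxAl mxtraceZ mxtrace_outer.
by rewrite /area2_mean_z (dotvBl (_ *: (y - x))) !dotvZl; field.
Qed.

Lemma Rintegral_area2_mean_z x :
  \int[nu]_(y in S) area2_mean_z m M x (y : 'rV[R]_d) = area2_mean_yz m M x.
Proof.
under eq_Rintegral => y /set_mem y1 do rewrite (area2_mean_z_sphere _ moment_mx_sym _ y1).
rewrite Rintegral_sphere_quadratic !mulmxDl -!scalemxAl !mxtraceD !mxtraceZ !mxtrace_outer.
rewrite /area2_mean_yz !dotvDl dotvNl !dotvZl -/(bform M x m) -/(sqnorm m).
by rewrite (bform_symC moment_mx_sym m x); field.
Qed.

Lemma Rintegral_area2_mean_yz :
  \int[nu]_(x in S) area2_mean_yz m M (x : 'rV[R]_d) = area2_mean m M.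
Proof.
under eq_Rintegral => x /set_mem x1 do rewrite (area2_mean_yz_sphere _ moment_mx_sym x1).
rewrite Rintegral_sphere_quadratic mulmxDl -!scalemxAl mxtraceD !mxtraceZ mxtrace_outer.
by rewrite /area2_mean dotvBl -/(bform M m m) -/(sqnorm m); field.
Qed.

Lemma IA2_area2_mean : IA2 nu = (area2_mean m M)%:E.
Proof.
have inner (x y : E) :
    (\int[nu]_z (area2 x y (z : 'rV[R]_d))%:E = (area2_mean_z m M x y)%:E)%E.
  by rewrite integral_sphere ?Rintegral_area2 // /area2 /=; sphere_bounded_tac.
have middle (x : E) :
    (\int[nu]_y (area2_mean_z m M x (y : 'rV[R]_d))%:E = (area2_mean_yz m M x)%:E)%E.
  by rewrite integral_sphere ?Rintegral_area2_mean_z // /area2_mean_z; sphere_bounded_tac.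
rewrite /IA2 (eq_integral (fun x : E => (area2_mean_yz m M x)%:E)) => [|x _].
  by rewrite integral_sphere ?Rintegral_area2_mean_yz // /area2_mean_yz; sphere_bounded_tac.
by rewrite -middle; apply: eq_integral => y _; exact: inner.
Qed.

Lemma bform_moment_mx_le u : bform M u u <= sqnorm u.
Proof.
have xxS : sphere_bounded (fun x : E => bform (u^T *m u) x x) by sphere_bounded_tac.
rewrite -mxtrace_outer -Rintegral_sphere_bform -[sqnorm u]Rintegral_sphere_cst.
apply: le_Rintegral => //; first exact: measurable_sphere.
- exact: sphere_bounded_integrable.
- exact/sphere_bounded_integrable/sphere_bounded_cst.
- by move=> x x1; rewrite bform_outer (dotvC x u) -expr2 sqr_dotv_le_sqnorm.
Qed.

Lemma mxtrace_moment_mx_sqr_ge (d_gt0 : (0 < d)%N) : d%:R^-1 <= \tr (M *m M).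
Proof.
have := mxtrace_mul_tr_ge0 (M - d%:R^-1%:M).
rewrite raddfB /= tr_scalar_mx moment_mx_sym mulmxBl !mulmxBr mul_mx_scalar.
rewrite mul_scalar_mx -scalar_mxM !raddfB /= !mxtraceZ mxtrace_scalar.
rewrite mxtrace_moment_mx -(mulr_natr (_ / d%:R)) mulfVK ?pnatr_eq0 -?lt0n //.
lra.
Qed.

Lemma area2_mean_le (d_gt0 : (0 < d)%N) : area2_mean m M <= (3 - 3 / d%:R) / 4.
Proof.
have := mxtrace_moment_mx_sqr_ge d_gt0; have := bform_moment_mx_le m.
rewrite /area2_mean; lra.
Qed.

Lemma mean_vec_balanced : balanced nu -> m = 0.
Proof.
move=> nu_bal; apply/rowP => i; rewrite !mxE.
by have := nu_bal i; rewrite integral_sphere => [[]|]; last sphere_bounded_tac.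
Qed.

Lemma moment_mx_isotropic : isotropic nu -> M = d%:R^-1%:M.
Proof.
move=> nu_iso; apply/matrixP => i j; rewrite !mxE.
have := nu_iso i j; rewrite integral_sphere => [[->]|]; last by sphere_bounded_tac.
by rewrite mxE; case: (i == j); rewrite ?mul1r ?mul0r.
Qed.

End moments.

Lemma maximizes_IA2_isotropic_moments (R : realType) (d : nat)
    (mu : probability (euclid R d) R) : (0 < d)%N -> on_sphere mu ->
  mean_vec mu = 0 -> moment_mx mu = d%:R^-1%:M -> maximizes_IA2 mu.
Proof.
move=> d_gt0 mu_sphere m0 M_iso nu nu_sphere.
rewrite (IA2_area2_mean mu_sphere) (IA2_area2_mean nu_sphere) lee_fin m0 M_iso.
by rewrite area2_mean_isotropic //; exact: area2_mean_le.
Qed.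

Section rotation_invariance.
Variables (R : realType) (d : nat).
Local Notation E := (euclid R d).
Local Notation S := (@sphere R d).

Lemma continuous_mulmx (Q : 'M[R]_d) : continuous (fun x : 'rV[R]_d => x *m Q).
Proof.
have entry_cont i j : continuous (fun x : 'rV[R]_d => (x *m Q) i j).
  under eq_fun => x do rewrite mxE.
  apply: (@continuous_big R _ +%R 0 xpredT add_continuous) => k _ x.
  exact: cvgMl (@coord_continuous R 1 d i k x).
move=> x A /= [P Pnb sPA]; suff : nbhs x [set y | A (y *m Q)] by [].
have nbhsF : Filter (nbhs x) := nbhs_filter x.
apply: (@filterS _ _ _ [set y | forall ij : 'I_1 * 'I_d,
  P ij.1 ij.2 ((y *m Q) ij.1 ij.2)]) => [y Py|].
  by apply: sPA => i j; exact: (Py (i, j)).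
apply: (@filter_forall _ _ (fun ij y => P ij.1 ij.2 ((y *m Q) ij.1 ij.2)) _ nbhsF) => ij.
exact: entry_cont ij.1 ij.2 x _ (Pnb ij.1 ij.2).
Qed.

Lemma measurable_mulmx (Q : 'M[R]_d) :
  measurable_fun [set: E] (fun x : E => (x *m Q : E)).
Proof.
apply: (@measurability _ _ E E setT _ open) => // _ [A oA <-].
rewrite setTI; apply: sub_sigma_algebra.
exact: (proj1 (continuousP _) (@continuous_mulmx Q) A oA).
Qed.

Variable sigma : probability E R.
Hypothesis sigma_surface : is_normalized_surface_measure sigma.

Lemma Rintegral_sphere_orthogonal (Q : 'M[R]_d) (f g : E -> R) :
  orthogonal_mx Q -> measurable_fun [set: E] f -> sphere_bounded g ->
  (forall x : E, g x = f (x *m Q)) ->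
  \int[sigma]_(x in S) g x = \int[sigma]_(x in S) f x.
Proof.
move=> oQ mf gS gfQ.
have SQ : (fun x : E => (x *m Q : E)) @^-1` S = S.
  by apply/funext => x; rewrite /preimage /sphere /= sqnorm_mulmx_orthogonal.
rewrite /Rintegral; congr fine.
transitivity (\int[pushforward sigma (fun x : E => (x *m Q : E))]_(x in S) (f x)%:E)%E;
  last by apply: eq_measure_integral => [|? A mA _];
    [exact: measurable_mulmx | exact: sigma_surface.2 Q A oQ mA].
rewrite integral_pushforward ?SQ.
- by apply: eq_integral => x _; rewrite /= gfQ.
- exact: measurable_mulmx.
- exact/measurable_realfun.measurable_EFinP.
- rewrite (_ : _ \o _ = EFin \o g); first exact: sphere_bounded_integrable.
  by apply/funext => x; rewrite /= gfQ.
- exact: measurable_sphere.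
Qed.

Lemma Rintegral_sphere_odd (Q : 'M[R]_d) (f : E -> R) :
  orthogonal_mx Q -> sphere_bounded f -> (forall x : E, f (x *m Q) = - f x) ->
  \int[sigma]_(x in S) f x = 0.
Proof.
move=> oQ fS fQ.
have /esym : \int[sigma]_(x in S) (-1 * f x) = \int[sigma]_(x in S) f x.
  apply: (Rintegral_sphere_orthogonal oQ fS.1) => [|x]; first by sphere_bounded_tac.
  by rewrite fQ mulN1r.
rewrite Rintegral_sphereZ //; lra.
Qed.

Local Notation m := (mean_vec sigma).
Local Notation M := (moment_mx sigma).

Lemma mean_vec_surface : m = 0.
Proof.
have oN : orthogonal_mx (- 1%:M : 'M[R]_d).
  by rewrite /orthogonal_mx raddfN /= trmx1 mulNmx mulmxN mulmx1 opprK.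
apply/rowP => i; rewrite !mxE; apply: (Rintegral_sphere_odd oN) => [|x].
  by sphere_bounded_tac.
by rewrite mulmxN mulmx1 mxE.
Qed.

Lemma moment_mx_surface_offdiag i j : i != j -> M i j = 0.
Proof.
move=> ij; pose D := \row_k (if k == i then -1 else 1 : R).
have oD : orthogonal_mx (diag_mx D).
  rewrite /orthogonal_mx tr_diag_mx mul_mx_diag; apply/matrixP => a b; rewrite !mxE.
  have [->|ab] := eqVneq a b; last by rewrite mulr0n mul0r.
  by rewrite mulr1n; case: ifP => _; rewrite ?mulrNN mulr1.
rewrite mxE; apply: (Rintegral_sphere_odd oD); first by sphere_bounded_tac.
by move=> x; rewrite mul_mx_diag !mxE eqxx eq_sym (negbTE ij); ring.
Qed.

Lemma moment_mx_surface_diag k l : M k k = M l l.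
Proof.
have oP : orthogonal_mx (perm_mx (tperm k l) : 'M[R]_d).
  by rewrite /orthogonal_mx tr_perm_mx -perm_mxM mulgV perm_mx1.
have xP (x : 'rV[R]_d) : (x *m perm_mx (tperm k l)) 0 l = x 0 k.
  by rewrite -[tperm k l]invgK -col_permE mxE tpermV tpermR.
have sqrS i : sphere_bounded (fun x : E => (x : 'rV[R]_d) 0 i * x 0 i).
  by sphere_bounded_tac.
rewrite !mxE; apply: (Rintegral_sphere_orthogonal oP (sqrS l).1 (sqrS k)) => x.
by rewrite xP.
Qed.

Lemma moment_mx_surface (d_gt0 : (0 < d)%N) : M = d%:R^-1%:M.
Proof.
have Mkk k : M k k = d%:R^-1.
  have := mxtrace_moment_mx (proj1 sigma_surface).
  rewrite /mxtrace (eq_bigr (fun=> M k k)) => [|l _]; last exact: moment_mx_surface_diag.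
  rewrite sumr_const card_ord -(mulr_natr (M k k)) => Md.
  have d_neq0 : d%:R != 0 :> R by rewrite pnatr_eq0 -lt0n.
  by apply: (mulIf d_neq0); rewrite Md mulVf.
apply/matrixP => i j; rewrite [RHS]mxE.
by have [<-|ij] := eqVneq i j; rewrite ?Mkk ?moment_mx_surface_offdiag ?mulr1n ?mulr0n.
Qed.

End rotation_invariance.

Theorem theorem4p4 (R : realType) (d : nat) (hd : (2 <= d)%N) :
  (forall sigma : probability (euclid R d) R,
      is_normalized_surface_measure sigma -> maximizes_IA2 sigma) /\
  (forall mu : probability (euclid R d) R,
      on_sphere mu -> balanced mu -> isotropic mu -> maximizes_IA2 mu).
Proof.
have d_gt0 : (0 < d)%N by apply: leq_trans hd.
split=> [sigma sigma_surface | mu mu_sphere mu_bal mu_iso];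
  apply: maximizes_IA2_isotropic_moments => //.
- exact: sigma_surface.1.
- exact: mean_vec_surface.
- exact: moment_mx_surface.
- exact: mean_vec_balanced.
- exact: moment_mx_isotropic.
Qed.
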